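(* Let $R$ be a regular run and let $\alpha>0$ be a moment such that SafeToOpen fails at $\alpha-$ and holds at $\alpha$. Let $\beta=\sup\{t\ge\alpha:\ \text{SafeToOpen holds over }[\alpha,t]\}\in(\alpha,\infty]$. Then (1) Dir = close at $\alpha$; (2) Dir = open over $(\alpha,\beta]$ (over $(\alpha,\infty)$ if $\beta=\infty$) and, if $\beta<\infty$, also at $\beta+$.
   Context: Setting (evolving algebra for the railroad crossing). States are structures over a vocabulary containing: a finite universe Tracks; the reals and ExtendedReals $=\mathbb{R}\cup\{\infty\}$ with standard $<$ and $+$ ($\infty$ largest); a nullary real-valued symbol $\mathrm{CT}$ (current time); positive real constants $d_{close},d_{open},d_{min},d_{max}$ with $d_{close}<d_{min}\le d_{max}$; a unary function TrackStatus from Tracks to $\{\text{empty},\text{coming},\text{incrossing}\}$; a unary function Deadline from Tracks to ExtendedReals; a nullary Dir with values in $\{\text{open},\text{close}\}$; a nullary GateStatus with values in $\{\text{opened},\text{closed}\}$. Put $W=d_{min}-d_{close}$ and $\Delta_{close}=d_{close}+(d_{max}-d_{min})=d_{max}-W$. For a track $x$, $s(x)$ is the condition [$\mathrm{TrackStatus}(x)=\text{empty}$ or $\mathrm{CT}+d_{open}<\mathrm{Deadline}(x)$], and SafeToOpen is $\forall x\in\mathrm{Tracks}\ s(x)$. The program has two modules (agents). Gate: simultaneously OpenGate ''if Dir=open then GateStatus:=opened'' and CloseGate ''if Dir=close then GateStatus:=closed''. Controller: simultaneously, for every track $x$, SetDeadline$(x)$ ''if TrackStatus$(x)$=coming and Deadline$(x)=\infty$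 then Deadline$(x):=\mathrm{CT}+W$'', SignalClose$(x)$ ''if $\mathrm{CT}=$Deadline$(x)$ then Dir:=close'', ClearDeadline$(x)$ ''if TrackStatus$(x)$=empty and Deadline$(x)<\infty$ then Deadline$(x):=\infty$'', together with SignalOpen ''if Dir=close and SafeToOpen then Dir:=open''. Executing a module means computing all updates it generates in the current state and performing them simultaneously (nothing happens if the update set is inconsistent). A module is enabled at a state if its update set is consistent and contains an update that changes the state. TrackStatus is external (changed only by the environment); Deadline, Dir, GateStatus are internal (changed only by the modules); other symbols are static. Runs: for $t\mapsto R(t)$, $t\in[0,\infty)$, let $\rho(t)$ be the reduct of $R(t)$ without CT. $R$ is a pre-run if all $R(t)$ share a superuniverse, $\mathrm{CT}=t$ in $R(t)$, and for every $\tau>0$ there are $0=t_0<\dots<t_n=\tau$ with $\rho$ constant on each $(t_i,t_{i+1})$. For a term $e$ (free variables fixed), $e_t$ is its value in $R(t)$, $e_{t+}$ (resp. $e_{t-}$, $t>0$) its constant value on some $(t,t+\epsilon)$ (resp. $(t-\epsilon,t)$); likewise $\rho(t\pm)$. $e$ holds over an interval if it holds at each point; $e$ becomes (is set to) $a$ at $t$ if $e_{t-}\ne a=e_t$ or $e_t\neq a=e_{t+}$. A pre-run is a run if (i) whenever $\rho(t+)\neq\rho(t)$, $\rho(t+)$ is the CT-free reduct of the result of executing some modules at $R(t)$ (these agents fire at $t$), with external functions equal in $\rho(t)$ and $\rho(t+)$; (ii) whenever $t>0$ and $\rho(t)\ne\rho(t-)$, they differ only in external functions. An agent is immediate if it fires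 at every moment it is enabled; bounded if immediate or there is $b>0$ with no interval $(t,t+b)$ over which it is enabled but never fires. Initial states: TrackStatus$(x)$=empty and Deadline$(x)=\infty$ for every track $x$. A regular run is a run $R$ with $R(0)$ initial such that: (Train Motion) for each track $x$ there is a finite or infinite sequence $0=t_0<t_1<t_2<\cdots$ (the significant moments of $x$) with TrackStatus$(x)$=empty over each $[t_{3i},t_{3i+1})$, =coming over each $[t_{3i+1},t_{3i+2})$ where $d_{min}\le t_{3i+2}-t_{3i+1}\le d_{max}$, =incrossing over each $[t_{3i+2},t_{3i+3})$, and, if the sequence is finite with last element $t_k$, then $3\mid k$ and TrackStatus$(x)$=empty over $[t_k,\infty)$; (Controller Timing) Controller is immediate; (Gate Timing) Gate is bounded, there is no interval $(t,t+d_{close})$ over which Dir=close and GateStatus=opened both hold, and no interval $(t,t+d_{open})$ over which Dir=open and GateStatus=closed both hold. *)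

From Stdlib Require Import Reals List.
Open Scope R_scope.

(** ExtendedReals = R ∪ {∞}, ∞ largest. *)
Inductive xR : Type := XFin (r : R) | XInf.

Definition xlt (a b : xR) : Prop :=
  match a, b with
  | XFin x, XFin y => x < y
  | XFin _, XInf => True
  | XInf, _ => False
  end.

Definition xle (a b : xR) : Prop :=
  match a, b with
  | XFin x, XFin y => x <= y
  | _, XInf => True
  | XInf, XFin _ => False
  end.

Inductive TStat : Type := Empty | Coming | InCrossing.
Inductive DirV : Type := DOpen | DClose.
Inductive GStat : Type := Opened | Closed.

Record Params : Type := mkParams {
  d_close : R; d_open : R; d_min : R; d_max : R }.

Definition valid_params (P : Params) : Prop :=
  0 < d_close P /\ 0 < d_open P /\ 0 < d_min P /\ 0 < d_max P /\
  d_close P < d_min P /\ d_min P <= d_max P.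

Definition W (P : Params) : R := d_min P - d_close P.

Definition finite_type (T : Type) : Prop := exists l : list T, forall x : T, In x l.

(** CT-free reduct rho(t) of a state R(t): the dynamic functions.
    The full state R(t) is (rho(t), CT = t) together with the statics. *)
Record state (T : Type) : Type := mkState {
  TrackStatus : T -> TStat;
  Deadline : T -> xR;
  Dir : DirV;
  GateStatus : GStat }.
Arguments TrackStatus {T}.
Arguments Deadline {T}.
Arguments Dir {T}.
Arguments GateStatus {T}.

Section Model.
Context {T : Type} (P : Params).

Definition s_track (s : state T) (ct : R) (x : T) : Prop :=
  TrackStatus s x = Empty \/ xlt (XFin (ct + d_open P)) (Deadline s x).

Definition SafeToOpen (s : state T) (ct : R) : Prop := forall x : T, s_track s ct x.

Inductive Loc : Type := LDeadline (x : T) | LDir | LGate.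
Inductive Val : Type := VX (v : xR) | VD (d : DirV) | VG (g : GStat).

Definition loc_val (s : state T) (l : Loc) : Val :=
  match l with
  | LDeadline x => VX (Deadline s x)
  | LDir => VD (Dir s)
  | LGate => VG (GateStatus s)
  end.

Inductive Agent : Type := Gate | Controller.

Definition updates (a : Agent) (s : state T) (ct : R) (l : Loc) (v : Val) : Prop :=
  match a with
  | Gate =>
      (Dir s = DOpen /\ l = LGate /\ v = VG Opened) \/
      (Dir s = DClose /\ l = LGate /\ v = VG Closed)
  | Controller =>
      (exists x, TrackStatus s x = Coming /\ Deadline s x = XInf /\
                 l = LDeadline x /\ v = VX (XFin (ct + W P))) \/
      (exists x, Deadline s x = XFin ct /\ l = LDir /\ v = VD DClose) \/
      (exists x, TrackStatus s x = Empty /\ xlt (Deadline s x) XInf /\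
                 l = LDeadline x /\ v = VX XInf) \/
      (Dir s = DClose /\ SafeToOpen s ct /\ l = LDir /\ v = VD DOpen)
  end.

Definition consistent (U : Loc -> Val -> Prop) : Prop :=
  forall l v1 v2, U l v1 -> U l v2 -> v1 = v2.

Definition enabled (a : Agent) (s : state T) (ct : R) : Prop :=
  consistent (updates a s ct) /\
  exists l v, updates a s ct l v /\ loc_val s l <> v.

(** Each module performs its updates if its update
    set is consistent (nothing happens otherwise); the two modules write disjoint
    locations. *)
Definition exec_upd (S : Agent -> Prop) (s : state T) (ct : R) (l : Loc) (v : Val) : Prop :=
  exists a, S a /\ consistent (updates a s ct) /\ updates a s ct l v.

Definition exec_result (S : Agent -> Prop) (s : state T) (ct : R) (s' : state T) : Prop :=
  TrackStatus s' = TrackStatus s /\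
  forall l : Loc,
    (forall v, exec_upd S s ct l v -> loc_val s' l = v) /\
    ((forall v, ~ exec_upd S s ct l v) -> loc_val s' l = loc_val s l).

(** A (candidate) run is given by its CT-free reducts rho : t |-> rho(t), t >= 0
    (values at t < 0 are irrelevant); R(t) = (rho(t), CT = t). *)
Variable rho : R -> state T.

Definition rlim (t : R) (s : state T) : Prop :=
  exists eps, 0 < eps /\ forall u, t < u < t + eps -> rho u = s.
Definition llim (t : R) (s : state T) : Prop :=
  exists eps, 0 < eps /\ forall u, t - eps < u < t -> rho u = s.

Definition pre_run : Prop :=
  forall tau, 0 < tau ->
    exists (n : nat) (p : nat -> R),
      p 0%nat = 0 /\ p n = tau /\
      (forall i, (i < n)%nat -> p i < p (S i)) /\
      (forall i, (i < n)%nat -> exists s, forall u, p i < u < p (S i) -> rho u = s).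

Definition is_run : Prop :=
  pre_run /\
  (forall t s, 0 <= t -> rlim t s -> s <> rho t ->
     exists S : Agent -> Prop, exec_result S (rho t) t s /\
                               TrackStatus s = TrackStatus (rho t)) /\
  (forall t s, 0 < t -> llim t s -> s <> rho t ->
     Deadline s = Deadline (rho t) /\ Dir s = Dir (rho t) /\
     GateStatus s = GateStatus (rho t)).

Definition fires (a : Agent) (t : R) : Prop :=
  exists s, rlim t s /\ s <> rho t /\
    exists S : Agent -> Prop, S a /\ exec_result S (rho t) t s.

Definition immediate (a : Agent) : Prop :=
  forall t, 0 <= t -> enabled a (rho t) t -> fires a t.

Definition bounded (a : Agent) : Prop :=
  immediate a \/
  exists b, 0 < b /\
    ~ (exists t, 0 <= t /\
         forall u, t < u < t + b -> enabled a (rho u) u /\ ~ fires a u).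

Definition initial (s : state T) : Prop :=
  forall x, TrackStatus s x = Empty /\ Deadline s x = XInf.

(** Index j belongs to the (finite with last index k, or infinite) sequence. *)
Definition in_range (N : option nat) (j : nat) : Prop :=
  match N with None => True | Some k => (j <= k)%nat end.

Definition train_motion (x : T) : Prop :=
  exists (tm : nat -> R) (N : option nat),
    tm 0%nat = 0 /\
    (forall j, in_range N (S j) -> tm j < tm (S j)) /\
    (forall i, in_range N (3 * i + 1) ->
       forall u, tm (3 * i)%nat <= u < tm (3 * i + 1)%nat ->
         TrackStatus (rho u) x = Empty) /\
    (forall i, in_range N (3 * i + 2) ->
       d_min P <= tm (3 * i + 2)%nat - tm (3 * i + 1)%nat <= d_max P /\
       forall u, tm (3 * i + 1)%nat <= u < tm (3 * i + 2)%nat ->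
         TrackStatus (rho u) x = Coming) /\
    (forall i, in_range N (3 * i + 3) ->
       forall u, tm (3 * i + 2)%nat <= u < tm (3 * i + 3)%nat ->
         TrackStatus (rho u) x = InCrossing) /\
    (match N with
     | None => True
     | Some k => (exists m, k = (3 * m)%nat) /\
                 forall u, tm k <= u -> TrackStatus (rho u) x = Empty
     end).

Definition regular_run : Prop :=
  is_run /\
  initial (rho 0) /\
  (forall x, train_motion x) /\
  immediate Controller /\
  bounded Gate /\
  ~ (exists t, 0 <= t /\ forall u, t < u < t + d_close P ->
        Dir (rho u) = DClose /\ GateStatus (rho u) = Opened) /\
  ~ (exists t, 0 <= t /\ forall u, t < u < t + d_open P ->
        Dir (rho u) = DOpen /\ GateStatus (rho u) = Closed).

Definition safe_upto (alpha t : R) : Prop :=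
  alpha <= t /\ forall u, alpha <= u <= t -> SafeToOpen (rho u) u.

Definition is_beta (alpha : R) (beta : xR) : Prop :=
  (beta = XInf /\ forall M, exists t, safe_upto alpha t /\ M < t) \/
  (exists b, beta = XFin b /\ is_lub (safe_upto alpha) b).

End Model.

(* Along a regular run every Deadline follows its train schedule: Deadline(x) is infinite
   while x is empty and equals t_(3i+1) + W from the arrival of the i-th train until x is
   empty again.  This is proved by induction over the real line; what keeps the Controller
   consistent along the way is that, as W < d_min, a train is still coming when its deadline
   expires, so SignalClose and SignalOpen never fire together.

   When SafeToOpen becomes true at alpha, a track x that made it fail just before alpha keeps
   its deadline D at alpha, so x has emptied by alpha and D < alpha: the Controller signalled
   close at D, and nothing reopened while x kept SafeToOpen false on (D, alpha).  On
   [alpha, beta) SafeToOpen holds, so SignalOpen fires at alpha and SignalClose cannot fire up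
   to beta, nor at beta itself, because an expiring deadline falsifies SafeToOpen on a left
   neighbourhood of it. *)

From Stdlib Require Import Reals Lra Lia Classical.
Open Scope R_scope.

Lemma is_lub_approx (E : R -> Prop) (b t : R) :
  is_lub E b -> t < b -> exists y, E y /\ t < y <= b.
Proof.
  intros [Hub Hlub] Htb. apply NNPP; intros Hnone.
  assert (b <= t); [|lra].
  apply Hlub. intros y Ey. destruct (Rle_dec y t) as [|Hyt]; [assumption|].
  exfalso; apply Hnone. exists y; split; [|split]; [assumption | lra | apply Hub, Ey].
Qed.

Lemma real_induction (a : R) (Q : R -> Prop) :
  Q a ->
  (forall t, a <= t -> (forall u, a <= u <= t -> Q u) ->
     exists e, 0 < e /\ forall u, t < u < t + e -> Q u) ->
  (forall t, a < t -> (forall u, a <= u < t -> Q u) -> Q t) ->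
  forall t, a <= t -> Q t.
Proof.
  intros Ha Hright Hleft t0 Ht0. apply NNPP; intros HnQ.
  set (E := fun x => a <= x /\ forall u, a <= u <= x -> Q u).
  assert (Ea : E a).
  { split; [lra|]. intros u Hu. replace u with a by lra. exact Ha. }
  assert (Hbound : bound E).
  { exists t0. intros x [Hax Hx]. destruct (Rle_dec x t0) as [|Hxt]; [assumption|].
    exfalso; apply HnQ, Hx; lra. }
  destruct (completeness E Hbound (ex_intro _ a Ea)) as [c Hc].
  assert (Hac : a <= c) by (apply (proj1 Hc), Ea).
  assert (Hbelow : forall u, a <= u < c -> Q u).
  { intros u Hu. destruct (is_lub_approx E c u Hc (proj2 Hu)) as [x [[_ Hx] Hux]].
    apply Hx; lra. }
  assert (Hupto : forall u, a <= u <= c -> Q u).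
  { intros u Hu. destruct (Req_dec u c) as [->|Huc]; [|apply Hbelow; lra].
    destruct (Req_dec a c) as [<-|Hac']; [exact Ha|]. apply Hleft; [lra | exact Hbelow]. }
  destruct (Hright c Hac Hupto) as [e [He Hq]].
  assert (Hce : E (c + e / 2)).
  { split; [lra|]. intros u Hu. destruct (Rle_dec u c); [apply Hupto | apply Hq]; lra. }
  pose proof (proj1 Hc _ Hce). lra.
Qed.

Lemma partition_cell_right (p : nat -> R) (t : R) (n : nat) :
  p 0%nat = 0 -> 0 <= t -> t < p n -> exists i, (i < n)%nat /\ p i <= t < p (S i).
Proof.
  intros H0 Ht. induction n as [|n IH]; intros Hn; [lra|].
  destruct (Rlt_dec t (p n)) as [Hlt|Hge].
  - destruct (IH Hlt) as [i [Hi Hpi]]. exists i; split; [lia | exact Hpi].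
  - exists n; split; [lia | lra].
Qed.

Lemma partition_cell_left (p : nat -> R) (t : R) (n : nat) :
  p 0%nat = 0 -> 0 < t -> t <= p n -> exists i, (i < n)%nat /\ p i < t <= p (S i).
Proof.
  intros H0 Ht. induction n as [|n IH]; intros Hn; [lra|].
  destruct (Rle_dec t (p n)) as [Hle|Hgt].
  - destruct (IH Hle) as [i [Hi Hpi]]. exists i; split; [lia | exact Hpi].
  - exists n; split; [lia | lra].
Qed.

Section Run.
Context {T : Type} {P : Params} {rho : R -> state T}.
Hypothesis hrun : is_run P rho.

Lemma rlim_exists t : 0 <= t -> exists s, rlim rho t s.
Proof.
  intros Ht. destruct hrun as [Hpre _].
  destruct (Hpre (t + 1)) as [n [p [H0 [Hn [_ Hconst]]]]]; [lra|].
  destruct (partition_cell_right p t n H0 Ht) as [i [Hi Hti]]; [lra|].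
  destruct (Hconst i Hi) as [s Hs]. exists s, (p (S i) - t).
  split; [lra|]. intros u Hu. apply Hs; lra.
Qed.

Lemma llim_exists t : 0 < t -> exists s, llim rho t s.
Proof.
  intros Ht. destruct hrun as [Hpre _].
  destruct (Hpre (t + 1)) as [n [p [H0 [Hn [_ Hconst]]]]]; [lra|].
  destruct (partition_cell_left p t n H0 Ht) as [i [Hi Hti]]; [lra|].
  destruct (Hconst i Hi) as [s Hs]. exists s, (t - p i).
  split; [lra|]. intros u Hu. apply Hs; lra.
Qed.

Lemma rlim_unique t s1 s2 : rlim rho t s1 -> rlim rho t s2 -> s1 = s2.
Proof.
  intros [e1 [He1 H1]] [e2 [He2 H2]].
  pose proof (Rmin_l e1 e2). pose proof (Rmin_r e1 e2).
  assert (0 < Rmin e1 e2) by (apply Rmin_glb_lt; assumption).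
  rewrite <- (H1 (t + Rmin e1 e2 / 2)), <- (H2 (t + Rmin e1 e2 / 2)); [reflexivity | lra | lra].
Qed.

Lemma llim_loc_val t s l : 0 < t -> llim rho t s -> loc_val s l = loc_val (rho t) l.
Proof.
  intros Ht Hs. destruct (classic (s = rho t)) as [->|Hne]; [reflexivity|].
  destruct hrun as [_ [_ Hleft]].
  destruct (Hleft t s Ht Hs Hne) as [HD [Hdir Hgate]].
  destruct l; simpl; congruence.
Qed.

Lemma left_agreeing_point t a : 0 < t -> a < t ->
  exists u, a < u < t /\ forall l, loc_val (rho u) l = loc_val (rho t) l.
Proof.
  intros Ht Hat. destruct (llim_exists t Ht) as [s [e [He Hs]]].
  pose proof (Rmax_l a (t - e)). pose proof (Rmax_r a (t - e)).
  assert (Rmax a (t - e) < t) by (apply Rmax_lub_lt; lra).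
  exists ((Rmax a (t - e) + t) / 2). split; [lra|].
  intros l. rewrite (Hs ((Rmax a (t - e) + t) / 2)) by lra.
  apply llim_loc_val; [exact Ht | exists e; split; assumption].
Qed.

Lemma rlim_loc_val_unchanged t s l v : 0 <= t -> rlim rho t s -> loc_val (rho t) l = v ->
  (forall a w, updates P a (rho t) t l w -> w = v) -> loc_val s l = v.
Proof.
  intros Ht Hs Hv Hupd. destruct (classic (s = rho t)) as [->|Hne]; [exact Hv|].
  destruct hrun as [_ [Hright _]].
  destruct (Hright t s Ht Hs Hne) as [S [[_ Hexec] _]].
  destruct (Hexec l) as [Hwritten Hkept].
  destruct (classic (exists w, exec_upd P S (rho t) t l w)) as [[w Hw]|Hnone].
  - rewrite (Hwritten w Hw). destruct Hw as [a [_ [_ Hu]]]. exact (Hupd a w Hu).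
  - rewrite Hkept; [exact Hv|]. intros w Hw. apply Hnone. exists w; exact Hw.
Qed.

Lemma loc_val_invariant l v a b : 0 <= a -> loc_val (rho a) l = v ->
  (forall t, a <= t < b -> forall ag w, updates P ag (rho t) t l w -> w = v) ->
  forall t, a <= t <= b -> loc_val (rho t) l = v.
Proof.
  intros Ha Hv Hupd t Ht.
  apply (real_induction a (fun t => t <= b -> loc_val (rho t) l = v)); [auto | | | lra | lra].
  - intros t' Hat' IH. destruct (Rlt_dec t' b) as [Hlt|Hge].
    + destruct (rlim_exists t') as [s [e [He Hs]]]; [lra|].
      exists e; split; [exact He|]. intros u Hu Hub. rewrite (Hs u Hu).
      apply (rlim_loc_val_unchanged t'); [lra | exists e; split; assumption | |].
      * apply IH; lra.
      * apply Hupd; lra.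
    + exists 1; split; [lra|]. intros; lra.
  - intros t' Hat' IH Ht'b.
    destruct (left_agreeing_point t' a) as [u [Hu Hagree]]; [lra | lra|].
    rewrite <- Hagree. apply IH; lra.
Qed.

End Run.

Section Updates.
Context {T : Type} (P : Params).

Lemma dir_update_cases (s : state T) ct a w : updates P a s ct LDir w ->
  (w = VD DClose /\ exists x, Deadline s x = XFin ct) \/
  (w = VD DOpen /\ SafeToOpen P s ct).
Proof.
  destruct a; simpl.
  - intros [[_ [Hl _]]|[_ [Hl _]]]; discriminate.
  - intros [[x [_ [_ [Hl _]]]]|[[x [Hx [_ ->]]]|[[x [_ [_ [Hl _]]]]|[_ [Hs [_ ->]]]]]];
      try discriminate.
    + left; split; [reflexivity | exists x; exact Hx].
    + right; split; [reflexivity | exact Hs].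
Qed.

Lemma deadline_update_cases (s : state T) ct a x w : updates P a s ct (LDeadline x) w ->
  (TrackStatus s x = Coming /\ Deadline s x = XInf /\ w = VX (XFin (ct + W P))) \/
  (TrackStatus s x = Empty /\ w = VX XInf).
Proof.
  destruct a; simpl.
  - intros [[_ [Hl _]]|[_ [Hl _]]]; discriminate.
  - intros [[y [Hc [Hi [Hl ->]]]]|[[y [_ [Hl _]]]|[[y [He [_ [Hl ->]]]]|[_ [_ [Hl _]]]]]];
      try discriminate; injection Hl as <-.
    + left; repeat split; assumption.
    + right; split; [assumption | reflexivity].
Qed.

(* The only possible clash is SignalClose against SignalOpen. *)
Lemma controller_consistent (s : state T) ct :
  (forall x, Deadline s x = XFin ct -> ~ SafeToOpen P s ct) ->
  consistent (updates P Controller s ct).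
Proof.
  intros Hclash [x| |] v1 v2 H1 H2.
  - destruct (deadline_update_cases s ct Controller x v1 H1) as [[Hc1 [_ ->]]|[He1 ->]];
    destruct (deadline_update_cases s ct Controller x v2 H2) as [[Hc2 [_ ->]]|[He2 ->]];
    congruence.
  - destruct (dir_update_cases s ct Controller v1 H1) as [[-> [x1 Hx1]]|[-> Hs1]];
    destruct (dir_update_cases s ct Controller v2 H2) as [[-> [x2 Hx2]]|[-> Hs2]];
    try reflexivity; exfalso; eapply Hclash; eassumption.
  - exfalso. simpl in H1.
    destruct H1 as [[? [? [? [Hl _]]]]|[[? [? [Hl _]]]|[[? [? [? [Hl _]]]]|[? [? [Hl _]]]]]];
      discriminate.
Qed.

End Updates.

Lemma in_range_le N a b : in_range N b -> (a <= b)%nat -> in_range N a.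
Proof. destruct N; simpl; lia. Qed.

Lemma nat_cases_mod3 j : exists i, (j = 3 * i \/ j = 3 * i + 1 \/ j = 3 * i + 2)%nat.
Proof.
  induction j as [|j [i [-> | [-> | ->]]]].
  - exists 0%nat; lia.
  - exists i; lia.
  - exists i; lia.
  - exists (S i); lia.
Qed.

Definition next_status (st : TStat) : TStat :=
  match st with Empty => Coming | Coming => InCrossing | InCrossing => Empty end.

Fixpoint phase_status (j : nat) : TStat :=
  match j with O => Empty | S j' => next_status (phase_status j') end.

Lemma phase_status_mod3 i : phase_status (3 * i) = Empty /\
  phase_status (3 * i + 1) = Coming /\ phase_status (3 * i + 2) = InCrossing.
Proof.
  assert (H0 : phase_status (3 * i) = Empty).
  { induction i as [|i IH]; [reflexivity|].
    replace (3 * S i)%nat with (S (S (S (3 * i)))) by lia.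
    cbn [phase_status]. rewrite IH. reflexivity. }
  replace (3 * i + 1)%nat with (S (3 * i)) by lia.
  replace (3 * i + 2)%nat with (S (S (3 * i))) by lia.
  cbn [phase_status]. rewrite H0. auto.
Qed.

Section Schedule.
Context {T : Type} (P : Params) (rho : R -> state T).

Definition train_schedule (x : T) (tm : nat -> R) (N : option nat) : Prop :=
  tm 0%nat = 0 /\
  (forall j, in_range N (S j) -> tm j < tm (S j)) /\
  (forall i, in_range N (3 * i + 1) ->
     forall u, tm (3 * i)%nat <= u < tm (3 * i + 1)%nat ->
       TrackStatus (rho u) x = Empty) /\
  (forall i, in_range N (3 * i + 2) ->
     d_min P <= tm (3 * i + 2)%nat - tm (3 * i + 1)%nat <= d_max P /\
     forall u, tm (3 * i + 1)%nat <= u < tm (3 * i + 2)%nat ->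
       TrackStatus (rho u) x = Coming) /\
  (forall i, in_range N (3 * i + 3) ->
     forall u, tm (3 * i + 2)%nat <= u < tm (3 * i + 3)%nat ->
       TrackStatus (rho u) x = InCrossing) /\
  (match N with
   | None => True
   | Some k => (exists m, k = (3 * m)%nat) /\
               forall u, tm k <= u -> TrackStatus (rho u) x = Empty
   end).

Variables (x : T) (tm : nat -> R) (N : option nat).
Hypothesis hsched : train_schedule x tm N.

Lemma schedule_increasing a b : (a < b)%nat -> in_range N b -> tm a < tm b.
Proof.
  destruct hsched as [_ [Hstep _]].
  induction b as [|b IH]; intros Hab Hb; [lia|].
  assert (tm b < tm (S b)) by (apply Hstep, Hb).
  destruct (Nat.eq_dec a b) as [->|Hne]; [assumption|].
  assert (tm a < tm b) by (apply IH; [lia | apply (in_range_le N b (S b)); [exact Hb | lia]]).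
  lra.
Qed.

Lemma schedule_nonneg j : in_range N j -> 0 <= tm j.
Proof.
  intros Hj. destruct hsched as [H0 _]. destruct j as [|j]; [lra|].
  pose proof (schedule_increasing 0 (S j) ltac:(lia) Hj). lra.
Qed.

Lemma in_range_block_end i r : (0 < r <= 2)%nat -> in_range N (3 * i + r) ->
  in_range N (3 * i + 3).
Proof.
  destruct hsched as [_ [_ [_ [_ [_ Hlast]]]]].
  destruct N as [k|]; simpl; [|auto]. destruct Hlast as [[m ->] _]. lia.
Qed.

Lemma status_during_phase j u : in_range N j -> tm j <= u ->
  (in_range N (S j) -> u < tm (S j)) -> TrackStatus (rho u) x = phase_status j.
Proof.
  intros Hj Hlo Hhi. destruct hsched as [_ [_ [Hempty [Hcoming [Hcrossing Hlast]]]]].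
  destruct (nat_cases_mod3 j) as [i [-> | [-> | ->]]];
    destruct (phase_status_mod3 i) as [H0 [H1 H2]].
  - rewrite H0. destruct (classic (in_range N (3 * i + 1))) as [Hr|Hr].
    + apply (Hempty i Hr). split; [exact Hlo|]. rewrite Nat.add_1_r. apply Hhi.
      rewrite <- Nat.add_1_r. exact Hr.
    + destruct N as [k|]; simpl in Hr, Hj; [|tauto].
      apply (proj2 Hlast). replace k with (3 * i)%nat by lia. exact Hlo.
  - rewrite H1. assert (Hr : in_range N (3 * i + 2)).
    { apply (in_range_le N _ (3 * i + 3)); [|lia]. apply (in_range_block_end i 1); [lia | exact Hj]. }
    apply (proj2 (Hcoming i Hr)). split; [exact Hlo|].
    replace (3 * i + 2)%nat with (S (3 * i + 1)) in * by lia. apply Hhi, Hr.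
  - rewrite H2.
    assert (Hr : in_range N (3 * i + 3)) by (apply (in_range_block_end i 2); [lia | exact Hj]).
    apply (Hcrossing i Hr). split; [exact Hlo|].
    replace (3 * i + 3)%nat with (S (3 * i + 2)) in * by lia. apply Hhi, Hr.
Qed.

Lemma status_active_phase i u : in_range N (3 * i + 3) ->
  tm (3 * i + 1)%nat <= u < tm (3 * i + 3)%nat -> TrackStatus (rho u) x <> Empty.
Proof.
  intros Hr Hu. destruct (phase_status_mod3 i) as [_ [Hc Hi]].
  destruct (Rlt_dec u (tm (3 * i + 2)%nat)) as [Hlt|Hge].
  - rewrite (status_during_phase (3 * i + 1) u), Hc;
      [discriminate | apply (in_range_le N _ (3 * i + 3)); [exact Hr | lia] | lra |].
    intros _. replace (S (3 * i + 1)) with (3 * i + 2)%nat by lia. exact Hlt.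
  - rewrite (status_during_phase (3 * i + 2) u), Hi;
      [discriminate | apply (in_range_le N _ (3 * i + 3)); [exact Hr | lia] | lra |].
    intros _. replace (S (3 * i + 2)) with (3 * i + 3)%nat by lia. lra.
Qed.

Lemma schedule_unbounded : N = None -> forall i, INR i * d_min P <= tm (3 * i)%nat.
Proof.
  intros HN. destruct hsched as [H0 [Hstep [_ [Hcoming _]]]]. subst N.
  induction i as [|i IH]; [simpl; rewrite H0; lra|].
  rewrite S_INR.
  assert (tm (3 * i)%nat < tm (3 * i + 1)%nat) by (rewrite Nat.add_1_r; apply Hstep; exact I).
  destruct (Hcoming i I) as [[Hmin _] _].
  assert (tm (3 * i + 2)%nat < tm (3 * i + 3)%nat)
    by (replace (3 * i + 3)%nat with (S (3 * i + 2)) by lia; apply Hstep; exact I).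
  replace (3 * S i)%nat with (3 * i + 3)%nat by lia. lra.
Qed.

Lemma schedule_cell t : 0 < d_min P -> 0 < t ->
  (exists j, in_range N (S j) /\ tm j < t <= tm (S j)) \/
  (exists k, N = Some k /\ tm k < t).
Proof.
  intros Hdmin Ht.
  assert (Hfind : forall n, in_range N n -> t <= tm n ->
            exists j, in_range N (S j) /\ tm j < t <= tm (S j)).
  { induction n as [|n IH]; intros Hr Hn; [destruct hsched as [H0 _]; lra|].
    destruct (Rle_dec t (tm n)) as [Hle|Hgt].
    - apply IH; [apply (in_range_le N _ (S n)); [exact Hr | lia] | exact Hle].
    - exists n; split; [exact Hr | lra]. }
  assert (Hunbounded : N = None -> exists n, t <= tm (3 * n)%nat).
  { intros HN. destruct (INR_archimed (d_min P) t Hdmin) as [n Hn].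
    exists n. pose proof (schedule_unbounded HN n). lra. }
  destruct N as [k|].
  - destruct (Rlt_dec (tm k) t) as [Hlt|Hge]; [right; exists k; split; auto|].
    left. apply (Hfind k); [simpl; lia | lra].
  - left. destruct (Hunbounded eq_refl) as [n Hn]. apply (Hfind (3 * n)%nat); [exact I | exact Hn].
Qed.

Lemma schedule_phase_cases t : 0 < d_min P -> 0 < t ->
  (exists i, in_range N (3 * i + 1) /\ tm (3 * i)%nat < t <= tm (3 * i + 1)%nat) \/
  (exists i, in_range N (3 * i + 3) /\ tm (3 * i + 1)%nat < t <= tm (3 * i + 3)%nat) \/
  (exists k, N = Some k /\ tm k < t).
Proof.
  intros Hdmin Ht.
  destruct (schedule_cell t Hdmin Ht) as [[j [Hr Hj]]|Htail]; [|right; right; exact Htail].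
  destruct (nat_cases_mod3 j) as [i [-> | [-> | ->]]].
  - left. exists i. rewrite Nat.add_1_r. split; assumption.
  - right; left. exists i.
    replace (S (3 * i + 1)) with (3 * i + 2)%nat in * by lia.
    assert (Hr3 : in_range N (3 * i + 3)) by (apply (in_range_block_end i 2); [lia | exact Hr]).
    pose proof (schedule_increasing (3 * i + 2) (3 * i + 3) ltac:(lia) Hr3). split; [exact Hr3 | lra].
  - right; left. exists i.
    replace (S (3 * i + 2)) with (3 * i + 3)%nat in * by lia.
    pose proof (schedule_increasing (3 * i + 1) (3 * i + 2) ltac:(lia)
                  (in_range_le N (3 * i + 2) (3 * i + 3) Hr ltac:(lia))).
    split; [exact Hr | lra].
Qed.

(* Every significant moment changes TrackStatus, so it cannot lie inside an interval where
   the state is constant. *)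
Lemma schedule_outside_constancy j t e s : in_range N j -> 0 <= t ->
  (forall u, t < u < t + e -> rho u = s) -> tm j < t + e -> tm j <= t.
Proof.
  intros Hj Ht Hconst Hte. destruct (Rle_dec (tm j) t) as [|Hgt]; [assumption|]. exfalso.
  destruct j as [|j]; [destruct hsched as [H0 _]; lra|].
  assert (Hprev : tm j < tm (S j)) by (apply schedule_increasing; [lia | exact Hj]).
  pose proof (Rmax_l t (tm j)). pose proof (Rmax_r t (tm j)).
  assert (Rmax t (tm j) < tm (S j)) by (apply Rmax_lub_lt; lra).
  set (m := Rmax t (tm j)) in *.
  assert (Hbefore : TrackStatus (rho ((m + tm (S j)) / 2)) x = phase_status j).
  { apply status_during_phase; [apply (in_range_le N j (S j)); [exact Hj | lia] | lra | intros; lra]. }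
  assert (Hat : TrackStatus (rho (tm (S j))) x = phase_status (S j)).
  { apply status_during_phase; [exact Hj | lra |]. intros Hr. apply schedule_increasing; [lia | exact Hr]. }
  rewrite Hconst in Hbefore, Hat by lra. rewrite Hbefore in Hat. simpl in Hat.
  destruct (phase_status j); discriminate.
Qed.

End Schedule.

Section Regular.
Context {T : Type} {P : Params} {rho : R -> state T}.
Hypothesis hP : valid_params P.
Hypothesis hreg : regular_run P rho.

Let hrun : is_run P rho := proj1 hreg.

Lemma rlim_loc_val_of_updates t s l v : 0 <= t -> rlim rho t s ->
  consistent (updates P Controller (rho t) t) ->
  loc_val (rho t) l = v \/ updates P Controller (rho t) t l v ->
  (forall a w, updates P a (rho t) t l w -> w = v) -> loc_val s l = v.
Proof.
  intros Ht Hs Hcons Hnow Hupd.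
  destruct (classic (loc_val (rho t) l = v)) as [Hv|Hv];
    [exact (rlim_loc_val_unchanged hrun t s l v Ht Hs Hv Hupd)|].
  destruct Hnow as [|Hu]; [contradiction|].
  pose proof hreg as [_ [_ [_ [Himm _]]]].
  destruct (Himm t Ht (conj Hcons (ex_intro _ l (ex_intro _ v (conj Hu Hv)))))
    as [s' [Hs' [_ [S [HS [_ Hexec]]]]]].
  rewrite (rlim_unique t s s' Hs Hs'). apply (proj1 (Hexec l)).
  exists Controller. split; [exact HS | split; assumption].
Qed.

Definition deadline_on_schedule (x : T) (tm : nat -> R) (N : option nat) (t : R) : Prop :=
  (forall i, in_range N (3 * i + 1) -> tm (3 * i)%nat < t <= tm (3 * i + 1)%nat ->
     Deadline (rho t) x = XInf) /\
  (forall i, in_range N (3 * i + 3) -> tm (3 * i + 1)%nat < t <= tm (3 * i + 3)%nat ->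
     Deadline (rho t) x = XFin (tm (3 * i + 1)%nat + W P)) /\
  (forall k, N = Some k -> tm k < t -> Deadline (rho t) x = XInf).

Definition deadlines_on_schedule (t : R) : Prop :=
  forall x tm N, train_schedule P rho x tm N -> deadline_on_schedule x tm N t.

Definition deadlines_on_schedule_upto (t : R) : Prop :=
  forall u, 0 <= u <= t -> deadlines_on_schedule u.

Lemma finite_deadline_origin t x D : 0 <= t -> deadlines_on_schedule_upto t ->
  Deadline (rho t) x = XFin D ->
  exists c, 0 <= c < t /\ D = c + W P /\
    (forall u, c < u <= t -> Deadline (rho u) x = XFin D) /\
    (forall u, c <= u < t -> TrackStatus (rho u) x <> Empty) /\
    (forall u, c <= u <= t -> u < c + d_min P -> TrackStatus (rho u) x = Coming).
Proof.
  intros Ht Hinv HD. destruct hP as [_ [_ [Hdmin _]]].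
  destruct (Req_dec t 0) as [->|Ht0].
  { pose proof hreg as [_ [Hinit _]]. rewrite (proj2 (Hinit x)) in HD. discriminate. }
  pose proof hreg as [_ [_ [Hmotion _]]]. destruct (Hmotion x) as [tm [N Hsched]].
  destruct (Hinv t (conj Ht (Rle_refl t)) x tm N Hsched) as [Hinf [Hset Htail]].
  destruct (schedule_phase_cases P rho x tm N Hsched t Hdmin ltac:(lra))
    as [[i [Hr Hti]]|[[i [Hr Hti]]|[k [Hk Htk]]]].
  - rewrite (Hinf i Hr Hti) in HD. discriminate.
  - rewrite (Hset i Hr Hti) in HD. injection HD as <-.
    assert (Hr2 : in_range N (3 * i + 2)) by (apply (in_range_le N _ (3 * i + 3)); [exact Hr | lia]).
    pose proof (schedule_nonneg P rho x tm N Hsched (3 * i + 1)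
                  (in_range_le N (3 * i + 1) (3 * i + 2) Hr2 ltac:(lia))).
    pose proof Hsched as [_ [_ [_ [Hcoming_phase _]]]].
    destruct (Hcoming_phase i Hr2) as [[Hlen _] Hcoming].
    exists (tm (3 * i + 1)%nat). split; [lra|]. split; [reflexivity|]. split; [|split].
    + intros u Hu. apply (proj1 (proj2 (Hinv u ltac:(lra) x tm N Hsched)) i Hr). lra.
    + intros u Hu. apply (status_active_phase P rho x tm N Hsched i u Hr). lra.
    + intros u Hu Hmin. apply Hcoming. lra.
  - rewrite (Htail k Hk Htk) in HD. discriminate.
Qed.

Lemma unsafe_near_deadline t x u : 0 <= t -> deadlines_on_schedule_upto t ->
  Deadline (rho t) x = XFin t -> t - W P < u <= t -> t - d_open P <= u ->
  ~ SafeToOpen P (rho u) u.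
Proof.
  intros Ht Hinv HD Hu Hu' Hsafe. destruct hP as [Hdc [_ [_ [_ [Hcm _]]]]].
  destruct (finite_deadline_origin t x t Ht Hinv HD) as [c [Hc [Hct [Hdl [_ Hcoming]]]]].
  unfold W in Hct, Hu.
  destruct (Hsafe x) as [Hempty|Hlate].
  - rewrite Hcoming in Hempty; [discriminate | lra | lra].
  - rewrite (Hdl u) in Hlate by lra. simpl in Hlate. lra.
Qed.

Lemma controller_consistent_at t : 0 <= t -> deadlines_on_schedule_upto t ->
  consistent (updates P Controller (rho t) t).
Proof.
  intros Ht Hinv. apply controller_consistent. intros x HD.
  destruct hP as [Hdc [Hdo [_ [_ [Hcm _]]]]].
  apply (unsafe_near_deadline t x t Ht Hinv HD); unfold W; lra.
Qed.

Lemma deadline_right_kept t s x r : 0 <= t -> rlim rho t s ->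
  TrackStatus (rho t) x <> Empty -> Deadline (rho t) x = XFin r -> Deadline s x = XFin r.
Proof.
  intros Ht Hs Hne HD.
  enough (E : loc_val s (LDeadline x) = VX (XFin r)) by (injection E; auto).
  apply (rlim_loc_val_unchanged hrun t); [exact Ht | exact Hs | simpl; rewrite HD; reflexivity |].
  intros a w Hu.
  destruct (deadline_update_cases P (rho t) t a x w Hu) as [[_ [Hinf _]]|[He _]]; congruence.
Qed.

Lemma deadline_right_cleared t s x : 0 <= t -> rlim rho t s ->
  consistent (updates P Controller (rho t) t) ->
  TrackStatus (rho t) x = Empty -> Deadline s x = XInf.
Proof.
  intros Ht Hs Hcons He.
  enough (E : loc_val s (LDeadline x) = VX XInf) by (injection E; auto).
  apply (rlim_loc_val_of_updates t); [exact Ht | exact Hs | exact Hcons | |].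
  - destruct (Deadline (rho t) x) as [r|] eqn:HD; [right | left; simpl; rewrite HD; reflexivity].
    simpl. right; right; left. exists x. rewrite HD. repeat split. exact He.
  - intros a w Hu.
    destruct (deadline_update_cases P (rho t) t a x w Hu) as [[Hc _]|[_ ->]]; congruence.
Qed.

Lemma deadline_right_set t s x : 0 <= t -> rlim rho t s ->
  consistent (updates P Controller (rho t) t) ->
  TrackStatus (rho t) x = Coming -> Deadline (rho t) x = XInf -> Deadline s x = XFin (t + W P).
Proof.
  intros Ht Hs Hcons Hc HD.
  enough (E : loc_val s (LDeadline x) = VX (XFin (t + W P))) by (injection E; auto).
  apply (rlim_loc_val_of_updates t); [exact Ht | exact Hs | exact Hcons | |].
  - right. simpl. left. exists x. repeat split; assumption.
  - intros a w Hu.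
    destruct (deadline_update_cases P (rho t) t a x w Hu) as [[_ [_ ->]]|[He _]]; congruence.
Qed.

Lemma deadline_right_limit t s x tm N : 0 <= t -> deadlines_on_schedule_upto t ->
  train_schedule P rho x tm N -> rlim rho t s ->
  (forall i, in_range N (3 * i + 1) -> tm (3 * i)%nat <= t < tm (3 * i + 1)%nat ->
     Deadline s x = XInf) /\
  (forall i, in_range N (3 * i + 3) -> tm (3 * i + 1)%nat <= t < tm (3 * i + 3)%nat ->
     Deadline s x = XFin (tm (3 * i + 1)%nat + W P)) /\
  (forall k, N = Some k -> tm k <= t -> Deadline s x = XInf).
Proof.
  intros Ht Hinv Hsched Hs.
  pose proof (controller_consistent_at t Ht Hinv) as Hcons.
  destruct (Hinv t (conj Ht (Rle_refl t)) x tm N Hsched) as [Hinf [Hset _]].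
  pose proof Hsched as [_ [_ [Hempty [Hcoming [_ Hlast]]]]].
  split; [|split].
  - intros i Hr Hti. apply (deadline_right_cleared t s x Ht Hs Hcons). exact (Hempty i Hr t Hti).
  - intros i Hr Hti.
    assert (Hr2 : in_range N (3 * i + 2)) by (apply (in_range_le N _ (3 * i + 3)); [exact Hr | lia]).
    destruct (Req_dec (tm (3 * i + 1)%nat) t) as [Harrival|Hlater].
    + rewrite Harrival. apply (deadline_right_set t s x Ht Hs Hcons).
      * pose proof (schedule_increasing P rho x tm N Hsched (3 * i + 1) (3 * i + 2)
                      ltac:(lia) Hr2).
        apply (proj2 (Hcoming i Hr2)). lra.
      * assert (Hr1 : in_range N (3 * i + 1)) by (apply (in_range_le N _ (3 * i + 2)); [exact Hr2 | lia]).
        pose proof (schedule_increasing P rho x tm N Hsched (3 * i) (3 * i + 1) ltac:(lia) Hr1).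
        apply (Hinf i Hr1). lra.
    + apply (deadline_right_kept t s x _ Ht Hs).
      * apply (status_active_phase P rho x tm N Hsched i t Hr). lra.
      * apply (Hset i Hr). lra.
  - intros k Hk Htk. apply (deadline_right_cleared t s x Ht Hs Hcons).
    rewrite Hk in Hlast. exact (proj2 Hlast t Htk).
Qed.

Lemma deadlines_right_step t : 0 <= t -> deadlines_on_schedule_upto t ->
  exists e, 0 < e /\ forall u, t < u < t + e -> deadlines_on_schedule u.
Proof.
  intros Ht Hinv. destruct (rlim_exists hrun t Ht) as [s [e [He Hs]]].
  exists e; split; [exact He|]. intros u Hu x tm N Hsched.
  destruct (deadline_right_limit t s x tm N Ht Hinv Hsched)
    as [Hinf [Hset Htail]]; [exists e; split; assumption|].
  assert (Hbefore : forall j, in_range N j -> tm j < u -> tm j <= t).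
  { intros j Hj Hju. apply (schedule_outside_constancy P rho x tm N Hsched j t e s Hj Ht Hs). lra. }
  unfold deadline_on_schedule. rewrite (Hs u Hu). split; [|split].
  - intros i Hr Hui. apply (Hinf i Hr). split; [|lra].
    apply Hbefore; [apply (in_range_le N _ (3 * i + 1)); [exact Hr | lia] | lra].
  - intros i Hr Hui. apply (Hset i Hr). split; [|lra].
    apply Hbefore; [apply (in_range_le N _ (3 * i + 3)); [exact Hr | lia] | lra].
  - intros k Hk Hku. apply (Htail k Hk). apply Hbefore; [rewrite Hk; simpl; lia | exact Hku].
Qed.

Lemma deadlines_left_step t : 0 < t -> (forall u, 0 <= u < t -> deadlines_on_schedule u) ->
  deadlines_on_schedule t.
Proof.
  intros Ht IH x tm N Hsched.
  assert (Hfrom_left : forall a, 0 <= a < t -> exists u, a < u < t /\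
            Deadline (rho t) x = Deadline (rho u) x /\ deadline_on_schedule x tm N u).
  { intros a Ha. destruct (left_agreeing_point hrun t a Ht (proj2 Ha)) as [u [Hu Hagree]].
    exists u. split; [exact Hu|]. split; [|apply (IH u); [lra | exact Hsched]].
    specialize (Hagree (LDeadline x)). simpl in Hagree. congruence. }
  pose proof (schedule_nonneg P rho x tm N Hsched) as Hnonneg.
  split; [|split].
  - intros i Hr Hti.
    destruct (Hfrom_left (tm (3 * i)%nat)) as [u [Hu [-> [Hinf _]]]].
    { split; [apply Hnonneg, (in_range_le N _ (3 * i + 1)); [exact Hr | lia] | lra]. }
    apply (Hinf i Hr). lra.
  - intros i Hr Hti.
    destruct (Hfrom_left (tm (3 * i + 1)%nat)) as [u [Hu [-> [_ [Hset _]]]]].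
    { split; [apply Hnonneg, (in_range_le N _ (3 * i + 3)); [exact Hr | lia] | lra]. }
    apply (Hset i Hr). lra.
  - intros k Hk Htk.
    destruct (Hfrom_left (tm k)) as [u [Hu [-> [_ [_ Htail]]]]].
    { split; [apply Hnonneg; rewrite Hk; simpl; lia | lra]. }
    apply (Htail k Hk). lra.
Qed.

Lemma deadlines_follow_schedule t : 0 <= t -> deadlines_on_schedule t.
Proof.
  apply real_induction; [| exact deadlines_right_step | exact deadlines_left_step].
  intros x tm N Hsched. pose proof (schedule_nonneg P rho x tm N Hsched) as Hnonneg.
  split; [|split].
  - intros i Hr Hi. pose proof (Hnonneg (3 * i)%nat (in_range_le N (3 * i) (3 * i + 1) Hr ltac:(lia))). lra.
  - intros i Hr Hi. pose proof (Hnonneg (3 * i + 1)%nat (in_range_le N (3 * i + 1) (3 * i + 3) Hr ltac:(lia))). lra.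
  - intros k Hk Hk0. assert (Hr : in_range N k) by (rewrite Hk; simpl; lia).
    pose proof (Hnonneg k Hr). lra.
Qed.

Lemma deadlines_upto t : deadlines_on_schedule_upto t.
Proof. intros u Hu. apply deadlines_follow_schedule, Hu. Qed.


Lemma dir_update_of_safe t a w : 0 <= t -> SafeToOpen P (rho t) t ->
  updates P a (rho t) t LDir w -> w = VD DOpen.
Proof.
  intros Ht Hsafe Hu.
  destruct (dir_update_cases P (rho t) t a w Hu) as [[_ [x Hx]]|[-> _]]; [exfalso|reflexivity].
  destruct hP as [Hdc [Hdo [_ [_ [Hcm _]]]]].
  apply (unsafe_near_deadline t x t Ht (deadlines_upto t) Hx); [unfold W; lra | lra | exact Hsafe].
Qed.

Lemma dir_update_of_unsafe t a w : ~ SafeToOpen P (rho t) t ->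
  updates P a (rho t) t LDir w -> w = VD DClose.
Proof.
  intros Hunsafe Hu.
  destruct (dir_update_cases P (rho t) t a w Hu) as [[-> _]|[_ Hsafe]]; [reflexivity | contradiction].
Qed.

Lemma dir_right_open_of_safe t s : 0 <= t -> SafeToOpen P (rho t) t -> rlim rho t s ->
  Dir s = DOpen.
Proof.
  intros Ht Hsafe Hs.
  enough (E : loc_val s LDir = VD DOpen) by (injection E; auto).
  apply (rlim_loc_val_of_updates t); [exact Ht | exact Hs | |  |].
  - apply controller_consistent_at; [exact Ht | apply deadlines_upto].
  - destruct (Dir (rho t)) eqn:Hd; [left; simpl; rewrite Hd; reflexivity | right].
    simpl. right; right; right. repeat split; assumption.
  - intros a w Hu. exact (dir_update_of_safe t a w Ht Hsafe Hu).
Qed.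

Lemma dir_right_close_of_deadline t x s : 0 <= t -> Deadline (rho t) x = XFin t ->
  rlim rho t s -> Dir s = DClose.
Proof.
  intros Ht HD Hs.
  assert (Hunsafe : ~ SafeToOpen P (rho t) t).
  { destruct hP as [Hdc [Hdo [_ [_ [Hcm _]]]]].
    apply (unsafe_near_deadline t x t Ht (deadlines_upto t) HD); unfold W; lra. }
  enough (E : loc_val s LDir = VD DClose) by (injection E; auto).
  apply (rlim_loc_val_of_updates t); [exact Ht | exact Hs | | |].
  - apply controller_consistent_at; [exact Ht | apply deadlines_upto].
  - right. simpl. right; left. exists x. repeat split; assumption.
  - intros a w Hu. exact (dir_update_of_unsafe t a w Hunsafe Hu).
Qed.

Lemma dir_right_open_of_no_deadline t s : 0 <= t -> Dir (rho t) = DOpen ->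
  (forall x, Deadline (rho t) x <> XFin t) -> rlim rho t s -> Dir s = DOpen.
Proof.
  intros Ht Hd Hnone Hs.
  enough (E : loc_val s LDir = VD DOpen) by (injection E; auto).
  apply (rlim_loc_val_unchanged hrun t); [exact Ht | exact Hs | simpl; rewrite Hd; reflexivity |].
  intros a w Hu.
  destruct (dir_update_cases P (rho t) t a w Hu) as [[_ [x Hx]]|[-> _]];
    [exfalso; exact (Hnone x Hx) | reflexivity].
Qed.

Lemma dir_after_right_limit d a b s : 0 <= a -> rlim rho a s -> Dir s = d ->
  (forall t, a < t < b -> forall ag w, updates P ag (rho t) t LDir w -> w = VD d) ->
  forall u, a < u <= b -> Dir (rho u) = d.
Proof.
  intros Ha [e [He Hs]] Hd Hupd u Hu.
  destruct (Rlt_dec u (a + e)) as [Hlt|Hge]; [rewrite (Hs u); [exact Hd | lra]|].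
  enough (E : loc_val (rho u) LDir = VD d) by (injection E; auto).
  apply (loc_val_invariant hrun LDir (VD d) (a + e / 2) b); [lra | | | lra].
  - simpl. rewrite (Hs (a + e / 2)), Hd by lra. reflexivity.
  - intros t Ht. apply Hupd. lra.
Qed.

Lemma dir_open_while_safe a b : 0 <= a -> (forall t, a <= t < b -> SafeToOpen P (rho t) t) ->
  forall u, a < u <= b -> Dir (rho u) = DOpen.
Proof.
  intros Ha Hsafe u Hu. destruct (rlim_exists hrun a Ha) as [s Hs].
  apply (dir_after_right_limit DOpen a b s Ha Hs); [| | exact Hu].
  - apply (dir_right_open_of_safe a s Ha); [apply Hsafe; lra | exact Hs].
  - intros t Ht ag w. apply dir_update_of_safe; [lra | apply Hsafe; lra].
Qed.

Lemma dir_close_while_unsafe a b x : 0 <= a -> Deadline (rho a) x = XFin a ->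
  (forall t, a < t < b -> ~ SafeToOpen P (rho t) t) ->
  forall u, a < u <= b -> Dir (rho u) = DClose.
Proof.
  intros Ha HD Hunsafe u Hu. destruct (rlim_exists hrun a Ha) as [s Hs].
  apply (dir_after_right_limit DClose a b s Ha Hs); [| | exact Hu].
  - exact (dir_right_close_of_deadline a x s Ha HD Hs).
  - intros t Ht ag w. apply dir_update_of_unsafe, Hunsafe, Ht.
Qed.

Lemma dir_close_at_safe_entry alpha : 0 < alpha ->
  (exists eps, 0 < eps /\ forall u, alpha - eps < u < alpha -> ~ SafeToOpen P (rho u) u) ->
  SafeToOpen P (rho alpha) alpha -> Dir (rho alpha) = DClose.
Proof.
  intros Halpha [eps [Heps Hunsafe]] Hsafe.
  destruct hP as [Hdc [Hdo [_ [_ [Hcm _]]]]].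
  destruct (left_agreeing_point hrun alpha (alpha - eps) Halpha ltac:(lra)) as [u0 [Hu0 Hagree]].
  destruct (not_all_ex_not _ _ (Hunsafe u0 Hu0)) as [x Hx].
  assert (HD0 : Deadline (rho u0) x = Deadline (rho alpha) x).
  { specialize (Hagree (LDeadline x)). simpl in Hagree. congruence. }
  unfold s_track in Hx. rewrite HD0 in Hx.
  destruct (Deadline (rho alpha) x) as [D|] eqn:HD; [|exfalso; apply Hx; right; exact I].
  assert (Hempty : TrackStatus (rho alpha) x = Empty).
  { destruct (Hsafe x) as [He|Hlate]; [exact He|]. exfalso. apply Hx. right.
    rewrite HD in Hlate. simpl in *. lra. }
  destruct (finite_deadline_origin alpha x D ltac:(lra) (deadlines_upto alpha) HD)
    as [c [Hc [HDc [Hdl [Hactive Hcoming]]]]].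
  assert (Hgone : c + d_min P <= alpha).
  { destruct (Rle_dec (c + d_min P) alpha) as [|Hgt]; [assumption|].
    rewrite Hcoming in Hempty; [discriminate | lra | lra]. }
  unfold W in HDc.
  apply (dir_close_while_unsafe D alpha x); [lra | apply Hdl; lra | | lra].
  intros t Ht Hsafe_t. destruct (Hsafe_t x) as [He|Hlate].
  - apply (Hactive t); [lra | exact He].
  - rewrite (Hdl t) in Hlate by lra. simpl in Hlate. lra.
Qed.

Lemma safe_below_lub alpha b : is_lub (safe_upto P rho alpha) b ->
  forall t, alpha <= t < b -> SafeToOpen P (rho t) t.
Proof.
  intros Hlub t Ht.
  destruct (is_lub_approx _ b t Hlub (proj2 Ht)) as [y [[_ Hy] Hty]]. apply Hy. lra.
Qed.

Lemma dir_open_right_of_lub alpha b : 0 <= alpha -> SafeToOpen P (rho alpha) alpha ->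
  is_lub (safe_upto P rho alpha) b ->
  exists eps, 0 < eps /\ forall u, b < u < b + eps -> Dir (rho u) = DOpen.
Proof.
  intros Halpha Hsafe Hlub.
  assert (Hab : alpha <= b).
  { apply (proj1 Hlub). split; [lra|]. intros u Hu. replace u with alpha by lra. exact Hsafe. }
  destruct (rlim_exists hrun b ltac:(lra)) as [s [e [He Hs]]].
  assert (Hrl : rlim rho b s) by (exists e; split; assumption).
  exists e; split; [exact He|]. intros u Hu. rewrite (Hs u Hu).
  destruct (Req_dec alpha b) as [<-|Hne]; [exact (dir_right_open_of_safe alpha s Halpha Hsafe Hrl)|].
  apply (dir_right_open_of_no_deadline b s); [lra | | | exact Hrl].
  - apply (dir_open_while_safe alpha b Halpha (safe_below_lub alpha b Hlub)). lra.
  - intros x HD. destruct hP as [Hdc [Hdo [_ [_ [Hcm _]]]]].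
    pose proof (Rmax_l alpha (Rmax (b - W P) (b - d_open P))).
    pose proof (Rmax_r alpha (Rmax (b - W P) (b - d_open P))).
    pose proof (Rmax_l (b - W P) (b - d_open P)). pose proof (Rmax_r (b - W P) (b - d_open P)).
    assert (Htb : Rmax alpha (Rmax (b - W P) (b - d_open P)) < b).
    { apply Rmax_lub_lt; [lra | apply Rmax_lub_lt; unfold W; lra]. }
    destruct (is_lub_approx _ b _ Hlub Htb) as [t [[_ Hsafe_t] Ht]].
    apply (unsafe_near_deadline b x t ltac:(lra) (deadlines_upto b) HD); [lra | lra |].
    apply Hsafe_t. lra.
Qed.

End Regular.

Theorem mainTheorem7 (T : Type) (P : Params) (rho : R -> state T)
  (hP : valid_params P) (hT : finite_type T)
  (hreg : regular_run P rho)
  (alpha : R) (halpha : 0 < alpha)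
  (hfail : exists eps, 0 < eps /\
             forall u, alpha - eps < u < alpha -> ~ SafeToOpen P (rho u) u)
  (hsafe : SafeToOpen P (rho alpha) alpha)
  (beta : xR) (hbeta : is_beta P rho alpha beta) :
  Dir (rho alpha) = DClose /\
  (forall u, alpha < u -> xle (XFin u) beta -> Dir (rho u) = DOpen) /\
  (forall b, beta = XFin b ->
     exists eps, 0 < eps /\ forall u, b < u < b + eps -> Dir (rho u) = DOpen).
Proof.
  split; [exact (dir_close_at_safe_entry hP hreg alpha halpha hfail hsafe)|].
  destruct hbeta as [[-> Hunbounded]|[b [-> Hlub]]].
  - split; [|discriminate].
    intros u Hu _. destruct (Hunbounded u) as [t [[_ Hsafe_t] Hut]].
    apply (dir_open_while_safe hP hreg alpha t); [lra | intros v Hv; apply Hsafe_t; lra | lra].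
  - split.
    + intros u Hu Hub. simpl in Hub.
      apply (dir_open_while_safe hP hreg alpha b); [lra | exact (safe_below_lub alpha b Hlub) | lra].
    + intros b' [= <-]. exact (dir_open_right_of_lub hP hreg alpha b ltac:(lra) hsafe Hlub).
Qed.
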